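(* Let $q$ and $k$ be odd positive integers and $m$ an even positive integer. No latin square of order $mq$ of $q$-step type possesses a $k$-plex.
   Context: A latin square of order $n$ is an $n\times n$ array of $n$ symbols in which each symbol occurs exactly once in each row and column. A $k$-plex in a latin square of order $n$ is a set of $kn$ cells containing exactly $k$ cells from each row, exactly $k$ cells from each column, and exactly $k$ occurrences of each symbol. A latin square of order $mq$ is of $q$-step type if it can be partitioned into an $m\times m$ array of $q\times q$ blocks $A_{ij}$ such that each block is a latin subsquare of order $q$ and two blocks $A_{ij}$, $A_{i'j'}$ contain the same set of symbols if and only if $i+j\equiv i'+j'\pmod m$. *)

From mathcomp Require Import all_boot.
Set Implicit Arguments. Unset Strict Implicit. Unset Printing Implicit Defensive.

Definition latin_square (n : nat) (L : 'I_n -> 'I_n -> 'I_n) : Prop :=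
  (forall r, injective (L r)) /\ (forall c, injective (fun r => L r c)).

Definition kplex (n : nat) (L : 'I_n -> 'I_n -> 'I_n) (k : nat)
    (P : {set 'I_n * 'I_n}) : Prop :=
  #|P| = k * n /\
  (forall r : 'I_n, #|[set x in P | x.1 == r]| = k) /\
  (forall c : 'I_n, #|[set x in P | x.2 == c]| = k) /\
  (forall s : 'I_n, #|[set x in P | L x.1 x.2 == s]| = k).

Definition block_cells (n q : nat) (i j : nat) : {set 'I_n * 'I_n} :=
  [set x : 'I_n * 'I_n | (x.1 %/ q == i) && (x.2 %/ q == j)].

Definition block_symbols (n q : nat) (L : 'I_n -> 'I_n -> 'I_n) (i j : nat)
  : {set 'I_n} :=
  [set L x.1 x.2 | x in block_cells n q i j].

(* A latin square of order m*q is of q-step type: each q x q block is a latin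
   subsquare of order q (it contains exactly q symbols), and blocks (i,j),
   (i',j') have the same symbol set iff i + j = i' + j' (mod m). *)
Definition q_step_type (m q : nat) (L : 'I_(m * q) -> 'I_(m * q) -> 'I_(m * q))
  : Prop :=
  (forall i j : 'I_m, #|block_symbols q L i j| = q) /\
  (forall i j i' j' : 'I_m,
      block_symbols q L i j = block_symbols q L i' j' <->
      i + j = i' + j' %[mod m]).

From mathcomp Require Import all_boot.

Set Implicit Arguments.
Unset Strict Implicit.
Unset Printing Implicit Defensive.

(* Index rows, columns and symbols by 'I_(m*q) and call r %/ q the band of r.
   Give every symbol y a class: the column band in which y occurs in row 0.
   The q-step condition forces, for every cell (r,c),
       band r + band c = class (L r c)   (mod m)                      (1)
   with y = L r c: by the q-step condition the block (band r, j) with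
   band r + j = class y (mod m) has the same symbols as block (0, class y),
   so it contains y; in row r of a latin square y then lies in column band j,
   and since it lies in column c, j = band c.  Summing (1) over a k-plex P, each band value is counted k times
   among rows, among columns and (via the classes, a bijection of the row-0
   columns) among symbols, so 2kS = kS (mod m), i.e. m divides kS, where
   S = \sum_x band x = q * 'C(m,2).  Parity then rules this out: with m even,
   m %| a * 'C(m,2) forces a * (m-1) to be even, impossible for a = kq odd. *)

Lemma sum_over_uniform_fibres (T I : finType) (P : {set T}) (g : T -> I)
    (f : I -> nat) (k : nat) :
  (forall i, #|[set x in P | g x == i]| = k) ->
  \sum_(x in P) f (g x) = k * \sum_i f i.
Proof.
move=> fibres; rewrite (partition_big g xpredT) //= big_distrr /=.
apply: eq_bigr => i _.
rewrite (eq_bigr (fun _ => f i)); last by move=> x /andP[_ /eqP ->].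
rewrite (eq_bigl (mem [set x in P | g x == i])); last by move=> x; rewrite !inE.
by rewrite sum_nat_const fibres.
Qed.

Lemma even_ndvd_odd_mul_bin2 (m a : nat) :
  0 < m -> ~~ odd m -> odd a -> ~~ (m %| a * 'C(m, 2)).
Proof.
move=> m_gt0 m_even a_odd.
have m_double : m = (m./2).*2.
  by have := odd_double_half m; rewrite (negbTE m_even) add0n.
have half_gt0 : 0 < m./2 by rewrite lt0n; apply: contraTneq m_gt0 => h; rewrite m_double h.
have pred_odd : odd m.-1 by move: m_even; rewrite -{1}(prednK m_gt0) /= negbK.
have bin2E : 'C(m, 2) = m./2 * m.-1.
  by rewrite bin2 {1}m_double -mul2n -mulnA mul2n doubleK.
rewrite bin2E {1}m_double -mul2n mulnCA [2 * _]mulnC dvdn_pmul2l //.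
by rewrite dvdn2 oddM a_odd pred_odd.
Qed.

Section Bands.

Variables m q : nat.
Hypothesis q_gt0 : 0 < q.

Lemma band_lt (x : 'I_(m * q)) : x %/ q < m.
Proof. by rewrite ltn_divLR // ltn_ord. Qed.

Lemma card_band (j : nat) : j < m -> #|[set x : 'I_(m * q) | x %/ q == j]| = q.
Proof.
move=> j_lt_m.
have in_range (t : 'I_q) : j * q + t < m * q.
  apply: (@leq_trans (j * q + q)); first by rewrite ltn_add2l.
  by rewrite -mulSnr leq_mul2r j_lt_m orbT.
pose embed (t : 'I_q) : 'I_(m * q) := Ordinal (in_range t).
have embed_inj : injective embed by move=> t1 t2 /(congr1 val) /= /addnI /val_inj.
suff -> : [set x : 'I_(m * q) | x %/ q == j] = embed @: [set: 'I_q].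
  by rewrite card_imset // cardsT card_ord.
apply/setP => x; rewrite inE; apply/eqP/imsetP => [x_band | [t _ ->]].
- have x_mod_lt : x %% q < q by rewrite ltn_pmod.
  exists (Ordinal x_mod_lt); first by rewrite inE.
  by apply: val_inj; rewrite /= -x_band -divn_eq.
- by rewrite /= divnMDl // divn_small // addn0.
Qed.

Lemma sum_bands : \sum_(x : 'I_(m * q)) x %/ q = q * 'C(m, 2).
Proof.
pose band (x : 'I_(m * q)) : 'I_m := Ordinal (band_lt x).
rewrite -bin2_sum big_mkord -(@sum_over_uniform_fibres _ _ setT band val q).
  by apply: eq_bigl => x; rewrite in_setT.
move=> j; rewrite -[RHS](card_band (ltn_ord j)).
by apply: eq_card => x; rewrite !inE.
Qed.

Variable L : 'I_(m * q) -> 'I_(m * q) -> 'I_(m * q).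
Hypothesis L_latin : latin_square L.
Hypothesis block_card : forall i j : 'I_m, #|block_symbols q L i j| = q.

(* In a row of band i, each symbol of block (i,j) occurs in column band j:
   the q cells of that row in the block carry q distinct symbols. *)
Lemma block_symbol_in_row (i j : 'I_m) (r : 'I_(m * q)) (y : 'I_(m * q)) :
  r %/ q = i -> y \in block_symbols q L i j ->
  exists2 c : 'I_(m * q), c %/ q = j & L r c = y.
Proof.
move=> r_band y_in.
have row_part : L r @: [set c : 'I_(m * q) | c %/ q == j] = block_symbols q L i j.
  apply/eqP; rewrite eqEcard card_imset; last exact: L_latin.1.
  rewrite block_card card_band // leqnn andbT.
  apply/subsetP => z /imsetP [c]; rewrite inE => c_band ->.
  by apply/imsetP; exists (r, c); rewrite // inE /= r_band c_band eqxx.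
by move: y_in; rewrite -row_part => /imsetP [c]; rewrite inE => /eqP; exists c.
Qed.

Hypothesis step_sets : forall i j i' j' : 'I_m,
  block_symbols q L i j = block_symbols q L i' j' <-> i + j = i' + j' %[mod m].
Hypothesis m_gt0 : 0 < m.

Lemma order_gt0 : 0 < m * q.
Proof. by rewrite muln_gt0 m_gt0. Qed.

Let row0 : 'I_(m * q) := Ordinal order_gt0.

Definition symbol_class (y : 'I_(m * q)) : nat := invF (L_latin.1 row0) y %/ q.

Lemma bands_congr_class (r c : 'I_(m * q)) :
  r %/ q + c %/ q = symbol_class (L r c) %[mod m].
Proof.
set y := L r c.
pose i : 'I_m := Ordinal (band_lt r).
pose j0 : 'I_m := Ordinal (band_lt (invF (L_latin.1 row0) y)).
pose j : 'I_m := Ordinal (@ltn_pmod (j0 + m - i) m m_gt0).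
pose zero : 'I_m := Ordinal m_gt0.
have shift : i + j = zero + j0 %[mod m].
  have i_le : i <= j0 + m by rewrite ltnW // ltn_addl.
  by rewrite /= modnDmr subnKC // modnDr.
have y_in0 : y \in block_symbols q L zero j0.
  apply/imsetP; exists (row0, invF (L_latin.1 row0) y); last by rewrite /= f_invF.
  by rewrite inE /= div0n !eqxx.
rewrite -(proj2 (step_sets _ _ _ _) shift) in y_in0.
have [c' c'_band Lc'] := @block_symbol_in_row i j r y erefl y_in0.
have -> : c = c' by apply: (L_latin.1 r); rewrite Lc'.
by rewrite c'_band.
Qed.

(* Classes are the bands of the row-0 columns, so they sum to the bands. *)
Lemma sum_symbol_classes :
  \sum_(y : 'I_(m * q)) symbol_class y = \sum_(x : 'I_(m * q)) x %/ q.
Proof.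
rewrite (reindex_inj (L_latin.1 row0)); apply: eq_bigr => x _.
by rewrite /symbol_class invF_f.
Qed.

(* Summing (1) over a k-plex gives 2kS = kS (mod m), so m divides kS. *)
Lemma kplex_band_sum_dvd (k : nat) (P : {set 'I_(m * q) * 'I_(m * q)}) :
  kplex L k P -> m %| k * \sum_(x : 'I_(m * q)) x %/ q.
Proof.
move=> [_ [rows [cols syms]]].
set S := \sum_(x : 'I_(m * q)) x %/ q.
have band_total : \sum_(x in P) (x.1 %/ q + x.2 %/ q) = k * S + k * S.
  rewrite big_split /=.
  by rewrite (sum_over_uniform_fibres (fun r : 'I_(m * q) => r %/ q) rows)
             (sum_over_uniform_fibres (fun c : 'I_(m * q) => c %/ q) cols).
have class_total : \sum_(x in P) symbol_class (L x.1 x.2) = k * S.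
  by rewrite (sum_over_uniform_fibres symbol_class syms) sum_symbol_classes.
have : k * S + k * S = 0 + k * S %[mod m].
  rewrite add0n -band_total -class_total -modn_summ -[RHS]modn_summ.
  by congr (_ %% _); apply: eq_bigr => x _; apply: bands_congr_class.
by move/eqP; rewrite eqn_modDr mod0n.
Qed.

End Bands.

Theorem theorem5p1 (q k m : nat) :
  0 < q -> odd q -> 0 < k -> odd k -> 0 < m -> ~~ odd m ->
  forall L : 'I_(m * q) -> 'I_(m * q) -> 'I_(m * q),
    latin_square L -> q_step_type L ->
    ~ exists P : {set 'I_(m * q) * 'I_(m * q)}, kplex L k P.
Proof.
move=> q_gt0 q_odd _ k_odd m_gt0 m_even L L_latin [block_card step_sets] [P P_kplex].
have := kplex_band_sum_dvd q_gt0 L_latin block_card step_sets m_gt0 P_kplex.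
rewrite sum_bands // mulnA.
by apply/negP; apply: even_ndvd_odd_mul_bin2; rewrite // oddM k_odd q_odd.
Qed.
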